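(* Let $k\ge 2$, $x_0\in\Sigma_k^*$, and $x_{n+1}=\mathcal P_k(x_n)$. Then there exists $N\ge 0$ such that $|x_n|\le \left\lceil \frac{2k^2}{k-1}\right\rceil$ for all $n\ge N$. Moreover $|x_n|\le \max\left\{|x_0|,\left\lceil \frac{2k^2}{k-1}\right\rceil\right\}$ for all $n\ge 0$. In particular, every fixed point of $\mathcal P_k$, and every word lying on a cycle of $\mathcal P_k$, has length at most $\left\lceil \frac{2k^2}{k-1}\right\rceil$.
   Context: Fix an integer $k\ge 2$ and the alphabet $\Sigma_k=\{0,1,\dots,k-1\}$. A word is a finite nonempty string of letters of $\Sigma_k$ (leading zeros allowed); $\Sigma_k^*$ denotes the set of words. For a word $x$, $|x|$ denotes its length and $|x|_i$ the number of occurrences of the letter $i$ in $x$. For a positive integer $c$, $[c]_k$ denotes its standard base-$k$ representation without leading zeros, viewed as a word over $\Sigma_k$; it has $\lfloor\log_k c\rfloor+1$ letters. The map $\mathcal P_k:\Sigma_k^*\to\Sigma_k^*$ is defined as follows: if $b_1>b_2>\dots>b_r$ are exactly the letters occurring in $x$ (i.e. those with $|x|_{b_j}\neq 0$), then $\mathcal P_k(x)=[|x|_{b_1}]_k\,b_1\,[|x|_{b_2}]_k\,b_2\cdots[|x|_{b_r}]_k\,b_r$ (concatenation). A fixed point is a word $x$ with $\mathcal P_k(x)=x$; a word $x$ lies on a cycle if $\mathcal P_k^{p}(x)=x$ for some $p\ge 1$. *)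

From mathcomp Require Import all_boot.
Set Implicit Arguments. Unset Strict Implicit. Unset Printing Implicit Defensive.

Definition is_word (k : nat) (x : seq nat) : bool :=
  (size x > 0) && all (fun a => a < k) x.

(* Standard base-k representation (most significant digit first, no leading
   zeros) of c > 0; [fuel] is a recursion bound (fuel = c suffices when k >= 2). *)
Fixpoint digits_aux (k fuel c : nat) : seq nat :=
  match fuel with
  | 0 => [:: c]
  | fuel'.+1 => if c < k then [:: c] else rcons (digits_aux k fuel' (c %/ k)) (c %% k)
  end.

Definition base_rep (k c : nat) : seq nat := digits_aux k c c.

(* P_k(x) = [|x|_{b1}]_k b1 ... [|x|_{br}]_k br over letters b1 > ... > br
   occurring in x. *)
Definition Pk (k : nat) (x : seq nat) : seq nat :=
  flatten [seq base_rep k (count_mem b x) ++ [:: b]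
          | b <- rev (iota 0 k) & count_mem b x != 0].

(* The bound ceil(2k^2/(k-1)) (for k >= 2). *)
Definition bound (k : nat) : nat := (2 * k ^ 2 + (k - 2)) %/ (k - 1).

Example ex1 : base_rep 10 1203 = [:: 1; 2; 0; 3]. Proof. by []. Qed.
Example ex2 : Pk 10 [:: 2;2;1;0;0;0;0;0;0;0;0;0;0] = [:: 2;2;1;1;1;0;0]. Proof. by []. Qed.
Example ex3 : bound 10 = 23. Proof. by []. Qed.
Example ex4 : bound 2 = 8. Proof. by []. Qed.

(* If a letter occurs c > 0 times in x, its block [c]_k b in P_k(x) has length
   floor(log_k c) + 2, and k * (floor(log_k c) + 2) <= 2k + c because
   k m <= k^m.  Summing over the at most k letters gives
   k |P_k(x)| <= 2k^2 + |x| <= B (k - 1) + |x| with B = ceil(2k^2/(k-1)).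
   Hence |P_k(x)| < |x| when |x| > B and |P_k(x)| <= B otherwise: the length
   drops by at least one per step until it is at most B, and then stays so. *)

From mathcomp Require Import all_boot.
From mathcomp Require Import zify.

Lemma mul_leq_expn k m : 1 < k -> k * m <= k ^ m.
Proof.
move=> k_gt1; case: m => [|m]; first by rewrite muln0.
rewrite expnS leq_pmul2l; last exact: ltnW.
exact: ltn_expl.
Qed.

Lemma size_digits_aux_gt0 k fuel c : 0 < size (digits_aux k fuel c).
Proof. by case: fuel => //= fuel; case: ifP; rewrite ?size_rcons. Qed.

Lemma expn_size_digits_aux k fuel c : 1 < k ->
  k ^ (size (digits_aux k fuel c)).-1 <= maxn c 1.
Proof.
move=> k_gt1; elim: fuel c => [|fuel IH] c /=; first by rewrite leq_maxr.
case: ifP => [_ | /negbT]; first by rewrite leq_maxr.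
rewrite -leqNgt => k_le_c; rewrite size_rcons /=.
have q_gt0 : 0 < c %/ k by rewrite divn_gt0 // ltnW.
have := IH (c %/ k); rewrite (maxn_idPl q_gt0).
have := size_digits_aux_gt0 k fuel (c %/ k).
case: (size _) => // s _ /= le_q.
rewrite expnS (maxn_idPl (leq_trans (ltnW k_gt1) k_le_c)).
apply: leq_trans (leq_mul (leqnn k) le_q) _.
by rewrite mulnC leq_divM.
Qed.

Lemma size_base_rep_le k c : 1 < k -> 0 < c ->
  k * (size (base_rep k c)).+1 <= 2 * k + c.
Proof.
move=> k_gt1 c_gt0.
have := expn_size_digits_aux k c c k_gt1; rewrite (maxn_idPl c_gt0).
have := mul_leq_expn k (size (base_rep k c)).-1 k_gt1.
have := size_digits_aux_gt0 k c c; rewrite /base_rep.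
case: (size _) => // s _ /= le_exp le_c; lia.
Qed.

Lemma sum_count_mem_uniq (T : eqType) (r x : seq T) : uniq r ->
  \sum_(b <- r) count_mem b x = count [in r] x.
Proof.
move=> r_uniq; elim: x => [|a x IH] /=; first by rewrite big1_seq.
rewrite big_split /= IH; congr (_ + _).
rewrite -(count_uniq_mem a r_uniq) -sum1_count [RHS]big_mkcond /=.
by apply: eq_bigr => b _; rewrite eq_sym; case: (b == a).
Qed.

Lemma size_Pk_le k x : 1 < k -> k * size (Pk k x) <= 2 * k ^ 2 + size x.
Proof.
move=> k_gt1.
rewrite /Pk size_flatten sumnE big_map big_map big_filter big_distrr /=.
apply: (@leq_trans (\sum_(b <- iota 0 k) (2 * k + count_mem b x))).
  rewrite big_rev [X in _ <= X](bigID (fun b => count_mem b x != 0)) /=.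
  apply: leq_trans (leq_addr _ _); apply: leq_sum => b; rewrite -lt0n => c_gt0.
  by rewrite size_cat addn1 size_base_rep_le.
rewrite big_split /= (@sum_count_mem_uniq _ _ x (iota_uniq 0 k)).
apply: leq_add; last exact: count_size.
by rewrite big_const_seq count_predT size_iota iter_addn_0 -mulnA mulnn.
Qed.

Lemma bound_ceil k : 1 < k -> 2 * k ^ 2 <= bound k * (k - 1).
Proof.
move=> k_gt1; rewrite /bound.
have := divn_eq (2 * k ^ 2 + (k - 2)) (k - 1).
have : (2 * k ^ 2 + (k - 2)) %% (k - 1) < k - 1 by rewrite ltn_pmod ?subn_gt0.
lia.
Qed.

Lemma size_Pk_le_max k x : 1 < k -> size (Pk k x) <= maxn (size x).-1 (bound k).
Proof.
move=> k_gt1; have := size_Pk_le k x k_gt1; have := bound_ceil k k_gt1.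
set P := size _; set L := size x; set B := bound k => le_B le_P.
case: (leqP L B) => [le_LB | lt_BL].
  have : k * P <= k * B by nia.
  by rewrite leq_pmul2l; lia.
have : k * P < k * L by nia.
by rewrite ltn_pmul2l; lia.
Qed.

Lemma size_iter_Pk_le k x n : 1 < k ->
  size (iter n (Pk k) x) <= maxn (size x - n) (bound k).
Proof.
move=> k_gt1; elim: n => [|n IH] /=; first by rewrite subn0 leq_maxl.
have := size_Pk_le_max k (iter n (Pk k) x) k_gt1; lia.
Qed.

Theorem mainTheorem3 (k : nat) (x0 : seq nat) :
  2 <= k -> is_word k x0 ->
  (exists N, forall n, N <= n -> size (iter n (Pk k) x0) <= bound k) /\
  (forall n, size (iter n (Pk k) x0) <= maxn (size x0) (bound k)) /\
  (Pk k x0 = x0 -> size x0 <= bound k) /\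
  ((exists p, 0 < p /\ iter p (Pk k) x0 = x0) -> size x0 <= bound k).
Proof.
move=> k_gt1 _; have size_iter n := size_iter_Pk_le k x0 n k_gt1.
split; [|split; [|split]].
- by exists (size x0) => n le_n; have := size_iter n; lia.
- by move=> n; have := size_iter n; lia.
- by move=> fixed; have := size_iter 1; rewrite /= fixed; lia.
- by case=> p [p_gt0 periodic]; have := size_iter p; rewrite periodic; lia.
Qed.
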